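(* Consider Algorithm 1 (described in the context) run on a strongly connected digraph $\mathcal{G}_d$ with edge bounds $l_{ji},u_{ji}$, under any realization of transmission delays bounded by $\overline{\tau}<\infty$. Then for all $k\ge0$, $0\le\varepsilon[k+1]\le\varepsilon[k]$.
   Context: Setting: $\mathcal{G}_d=(\mathcal{V},\mathcal{E})$ is a strongly connected digraph, $\mathcal{V}=\{v_1,\dots,v_n\}$, $n\ge2$; an edge $(v_j,v_i)$ carries flow from $v_i$ to $v_j$. $\mathcal{N}_j^-=\{v_i:(v_j,v_i)\in\mathcal{E}\}$, $\mathcal{N}_j^+=\{v_l:(v_l,v_j)\in\mathcal{E}\}$, $\mathcal{D}_j=|\mathcal{N}_j^-|+|\mathcal{N}_j^+|$. Each edge has real bounds $1\le l_{ji}\le u_{ji}$. Communication is bidirectional along every edge. Projection: $[x]_{ji}=\max\{\lceil l_{ji}\rceil,\min\{\lfloor u_{ji}\rfloor,x\}\}$. State: for each edge $(v_l,v_j)$, the tail $v_j$ holds the actual flow $f_{lj}[k]$; for each edge $(v_j,v_i)$, the head $v_j$ holds a perceived flow $f^{(p)}_{ji}[k]$. Actual balance $b_j[k]=\sum_{v_i\in\mathcal{N}_j^-}f_{ji}[k]-\sum_{v_l\in\mathcal{N}_j^+}f_{lj}[k]$; perceived balance $b^{(p)}_j[k]=\sum_{v_i\in\mathcal{N}_j^-}f^{(p)}_{ji}[k]-\sum_{v_l\in\mathcal{N}_j^+}f_{lj}[k]$; total imbalance $\varepsilon[k]=\sum_j|b_j[k]|$. Algorithm 1. Initialization: $f_{ji}[0]=f^{(p)}_{ji}[0]=\lceil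 l_{ji}\rceil$ for all edges; each $v_j$ fixes a cyclic order of its $\mathcal{D}_j$ incident (incoming and outgoing) edges and a pointer into it. Iteration $k=0,1,2,\dots$, at each node $v_j$: (1) compute $b^{(p)}_j[k]$. (2) If $b^{(p)}_j[k]>0$, starting at the pointer and cycling through the order, visit edges one at a time: at an outgoing edge $(v_l,v_j)$, if $f_{lj}[k]+c^{(j)}_{lj}[k]<\lfloor u_{lj}\rfloor$ add $1$ to $c^{(j)}_{lj}[k]$; at an incoming edge $(v_j,v_i)$, if $f^{(p)}_{ji}[k]+c^{(j)}_{ji}[k]>\lceil l_{ji}\rceil$ subtract $1$ from $c^{(j)}_{ji}[k]$ (the $c$'s start at $0$; edges at their limit are skipped); stop as soon as the total number of unit changes equals $b^{(p)}_j[k]$, leaving the pointer at the next edge. If $b^{(p)}_j[k]\le 0$, all $c^{(j)}[k]=0$. (3) $v_j$ transmits $c^{(j)}_{lj}[k]$ to each out-neighbor $v_l$ and $c^{(j)}_{ji}[k]$ to each in-neighbor $v_i$. A message sent at step $k$ over a link in a given direction is delivered at step $k+\tau$, where the integer $\tau\in[0,\overline{\tau}]$ is arbitrary (unknown, time-varying, independent across links and directions). (4) $v_j$ forms $\overline{c}^{(l)}_{lj}[k]$ (resp. $\overline{c}^{(i)}_{ji}[k]$) as the sum of all values $c^{(l)}_{lj}[k_0]$ (resp. $c^{(i)}_{ji}[k_0]$) sent by $v_l$ (resp. $v_i$) that are delivered at step $k$ (zero if none). (5)–(6) $f_{lj}[k+1]=[f_{lj}[k]+c^{(j)}_{lj}[k]+\overline{c}^{(l)}_{lj}[k]]_{lj}$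 and $f^{(p)}_{ji}[k+1]=[f^{(p)}_{ji}[k]+c^{(j)}_{ji}[k]+\overline{c}^{(i)}_{ji}[k]]_{ji}$. *)

From HB Require Import structures.
From mathcomp Require Import all_boot all_order all_algebra.
Set Implicit Arguments. Unset Strict Implicit. Unset Printing Implicit Defensive.
Import Order.TTheory GRing.Theory Num.Theory.
Local Open Scope ring_scope.

(* E : rel V, and [E j i] means the edge (v_j, v_i),
     carrying flow from v_i to v_j (tail v_i, head v_j).
   - Flows are integer valued; [f a b] is the actual flow on edge (v_a, v_b)
     (held by the tail b), [fp a b] the perceived flow on edge (v_a, v_b)
     (held by the head a).  Values off edges are irrelevant.
   - The incident edges of node j are encoded in V + V:
       inl i  = incoming edge (v_j, v_i)   (v_i in N_j^-)
       inr l  = outgoing edge (v_l, v_j)   (v_l in N_j^+). *)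

Section Alg.
Variables (R : archiRealFieldType) (V : finType) (E : rel V) (lo up : V -> V -> R).

Definition lceil (a b : V) : int := Num.ceil (lo a b).
Definition ufloor (a b : V) : int := Num.floor (up a b).

Definition proj (a b : V) (x : int) : int :=
  Order.max (lceil a b) (Order.min (ufloor a b) x).

Definition incident (j : V) (x : V + V) : bool :=
  match x with inl i => E j i | inr l => E l j end.

Definition balance (f : V -> V -> int) (j : V) : int :=
  \sum_(i | E j i) f j i - \sum_(l | E l j) f l j.

Definition pbalance (f fp : V -> V -> int) (j : V) : int :=
  \sum_(i | E j i) fp j i - \sum_(l | E l j) f l j.

Definition imbalance (f : V -> V -> int) : int :=
  \sum_(j : V) `|balance f j|.

Definition upd (c : V + V -> int) (e : V + V) (v : int) : V + V -> int :=
  fun x => if x == e then v else c x.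

(* One visit of step (2) at node j: state = (c, number of unit changes, pointer). *)
Definition visit (f fp : V -> V -> int) (j : V) (s : seq (V + V))
    (st : (V + V -> int) * nat * nat) : (V + V -> int) * nat * nat :=
  let: (c, cnt, p) := st in
  if (cnt%:Z >= pbalance f fp j) then st else
  let e := nth (inl j) s p in
  let p' := (p.+1 %% size s)%N in
  match e with
  | inr l => if f l j + c e < ufloor l j
             then (upd c e (c e + 1), cnt.+1, p') else (c, cnt, p')
  | inl i => if fp j i + c e > lceil j i
             then (upd c e (c e - 1), cnt.+1, p') else (c, cnt, p')
  end.

(* Step (2) at node j: returns (c^{(j)}[k], number of changes, new pointer).
   The visiting loop stops as soon as b^{(p)}_j[k] unit changes have been made;
   it is run for at most b^{(p)}_j[k] * D_j visits, which suffices to reach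
   b^{(p)}_j[k] changes whenever this is possible at all (otherwise every
   incident edge is at its limit and no further change can occur). *)
Definition alloc (f fp : V -> V -> int) (s : seq (V + V)) (j : V) (p : nat)
    : (V + V -> int) * nat * nat :=
  let bp := pbalance f fp j in
  if 0 < bp then iter (`|bp|%N * size s)%N (visit f fp j s) (fun _ => 0, 0%N, p)
  else (fun _ => 0, 0%N, p).

End Alg.

(* The proof tracks, for every node j, how many units its balance can lose in
   one step.  A node only ever changes flows through feasible allocations of
   at most its perceived surplus (section Allocation), and a node whose
   perceived balance is nonnegative keeps it nonnegative; so a node with a
   negative perceived balance has never allocated anything.  On each edge the
   tail applies its own increments at once and the head its own decrements at
   once, each learning the other's with a delay; the gap between actual and
   perceived flow therefore covers all changes still in transit.  Together
   these bound the one-step loss of every node by the positive part of its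
   actual balance (section Execution).  Since every unit lost by one node is
   gained by another, a purely combinatorial argument (section Imbalance)
   shows that the sum of the absolute balances cannot grow. *)

From HB Require Import structures.
From mathcomp Require Import all_boot all_order all_algebra zify.
Import Order.TTheory GRing.Theory Num.Theory.
Set Implicit Arguments. Unset Strict Implicit.
Local Open Scope ring_scope.

Section Projection.
Variables (R : archiRealFieldType) (V : finType) (lo up : V -> V -> R).

(* Upper end of the range of the projection: the floor of the upper bound,
   unless no integer lies between the two bounds. *)
Definition cap (a b : V) : int := Order.max (lceil lo a b) (ufloor up a b).

Lemma proj_ge_lceil a b x : lceil lo a b <= proj lo up a b x.
Proof. rewrite /proj; lia. Qed.

Lemma proj_le_cap a b x : proj lo up a b x <= cap a b.
Proof. rewrite /proj /cap; lia. Qed.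

Lemma proj_ge a b z w : w <= z -> w <= cap a b -> w <= proj lo up a b z.
Proof. rewrite /proj /cap; lia. Qed.

Lemma proj_le a b z w : z <= w -> lceil lo a b <= w -> proj lo up a b z <= w.
Proof. rewrite /proj; lia. Qed.

End Projection.

Section Allocation.
Variables (R : archiRealFieldType) (V : finType) (E : rel V) (lo up : V -> V -> R).
Variables (f fp : V -> V -> int) (j : V).

(* Net amount by which an allocation [c] at node [j] lowers its perceived
   balance: increments on outgoing edges plus decrements on incoming edges. *)
Definition net_alloc (c : V + V -> int) : int :=
  \sum_(l | E l j) c (inr l) - \sum_(i | E j i) c (inl i).

Definition feasible_alloc (c : V + V -> int) : Prop :=
  [/\ forall l, 0 <= c (inr l), forall i, c (inl i) <= 0,
      forall l, c (inr l) = 0 \/ f l j + c (inr l) <= ufloor up l j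
    & forall i, c (inl i) = 0 \/ lceil lo j i <= fp j i + c (inl i)].

Lemma net_alloc0 (c : V + V -> int) : (forall x, c x = 0) -> net_alloc c = 0.
Proof. by move=> c0; rewrite /net_alloc !big1 ?subr0. Qed.

Lemma net_alloc_updr (c : V + V -> int) l v : E l j ->
  net_alloc (upd c (inr l) v) = net_alloc c - c (inr l) + v.
Proof.
move=> Elj; rewrite /net_alloc (bigD1 l) //= [in RHS](bigD1 l) //= /upd eqxx.
rewrite (eq_bigr (fun l' => c (inr l'))); last first.
  by move=> l' /andP[_ nl]; case: eqP => // -[] /eqP; rewrite (negbTE nl).
by rewrite [X in _ - X](eq_bigr (fun i => c (inl i))) //; lia.
Qed.

Lemma net_alloc_updl (c : V + V -> int) i v : E j i ->
  net_alloc (upd c (inl i) v) = net_alloc c + c (inl i) - v.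
Proof.
move=> Eji; rewrite /net_alloc (bigD1 i (P := fun i => E j i)) //=.
rewrite [in RHS](bigD1 i (P := fun i => E j i)) //= /upd eqxx.
rewrite [X in _ - (_ + X)](eq_bigr (fun i' => c (inl i'))); last first.
  by move=> i' /andP[_ ni]; case: eqP => // -[] /eqP; rewrite (negbTE ni).
by rewrite (eq_bigr (fun l => c (inr l))) //; lia.
Qed.

Lemma feasible_incr_out (c : V + V -> int) l :
  feasible_alloc c -> f l j + c (inr l) < ufloor up l j ->
  feasible_alloc (upd c (inr l) (c (inr l) + 1)).
Proof.
rewrite /upd => -[cr cl br bl] below; split=> [l'|i|l'|i] /=.
- by case: eqP => [[?]|_]; subst; [have := cr l; lia | exact: cr].
- exact: cl.
- by case: eqP => [[?]|_]; subst; [right; lia | exact: br].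
- exact: bl.
Qed.

Lemma feasible_decr_in (c : V + V -> int) i :
  feasible_alloc c -> lceil lo j i < fp j i + c (inl i) ->
  feasible_alloc (upd c (inl i) (c (inl i) - 1)).
Proof.
rewrite /upd => -[cr cl br bl] above; split=> [l|i'|l|i'] /=.
- exact: cr.
- by case: eqP => [[?]|_]; subst; [have := cl i; lia | exact: cl].
- exact: br.
- by case: eqP => [[?]|_]; subst; [right; lia | exact: bl].
Qed.

Variable s : seq (V + V).
Hypothesis s_incident : forall x, (x \in s) = incident E j x.

Definition visit_inv (st : (V + V -> int) * nat * nat) : Prop :=
  let: (c, cnt, q) := st in
  [/\ (q < size s)%N, feasible_alloc c, net_alloc c = cnt%:Z
    & cnt%:Z <= pbalance E f fp j].

Lemma visit_preserves st : visit_inv st -> visit_inv (visit E lo up f fp j s st).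
Proof.
case: st => [[c cnt] q] [q_lt feas net cnt_le] /=.
case: ifP => done_visiting //.
have q'_lt : (q.+1 %% size s < size s)%N by rewrite ltn_mod; case: (size s) q_lt.
have : nth (inl j) s q \in s by rewrite mem_nth.
rewrite s_incident; case: (nth (inl j) s q) => [i|l] /= Ee.
- case: ifP => above //; split=> //; first exact: feasible_decr_in.
    by rewrite net_alloc_updl // net; lia.
  lia.
- case: ifP => below //; split=> //; first exact: feasible_incr_out.
    by rewrite net_alloc_updr // net; lia.
  lia.
Qed.

Lemma alloc_spec p : (p < size s)%N ->
  let r := alloc E lo up f fp s j p in
  [/\ (r.2 < size s)%N, feasible_alloc r.1.1,
      0 < pbalance E f fp j -> net_alloc r.1.1 <= pbalance E f fp j
    & ~~ (0 < pbalance E f fp j) -> forall x, r.1.1 x = 0].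
Proof.
move=> p_lt /=; rewrite /alloc; case: ifP => pos; last first.
  by split=> //; split=> // *; left.
have : visit_inv (iter (`|pbalance E f fp j|%N * size s) (visit E lo up f fp j s)
                       (fun=> 0, 0%N, p)).
  elim: (_ * _)%N => [|n IH] /=; last exact: visit_preserves.
  split=> //; [by split=> // *; left | exact: net_alloc0 | lia].
by case: (iter _ _ _) => [[c cnt] q] /= [? ? net ?]; split=> // _; rewrite net.
Qed.

End Allocation.

Section Imbalance.
Variables (V : finType) (E : rel V).

Definition loss (f g : V -> V -> int) (j : V) : int :=
  \sum_(i | E j i) Order.max (f j i - g j i) 0
  + \sum_(l | E l j) Order.max (g l j - f l j) 0.

Lemma loss_ge0 f g j : 0 <= loss f g j.
Proof. by apply: addr_ge0; apply: sumr_ge0 => *; lia. Qed.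

(* [big_split] and [sumrB] for integer sums, stated with the ring operations
   so that the resulting sums are syntactically those linear arithmetic sees. *)
Lemma sumzD (I : finType) (P : pred I) (F G : I -> int) :
  \sum_(i | P i) (F i + G i) = \sum_(i | P i) F i + \sum_(i | P i) G i.
Proof. exact: big_split. Qed.

Lemma sumzB (I : finType) (P : pred I) (F G : I -> int) :
  \sum_(i | P i) (F i - G i) = \sum_(i | P i) F i - \sum_(i | P i) G i.
Proof. exact: sumrB. Qed.

Lemma sum_gain_loss (I : finType) (P : pred I) (F G : I -> int) :
  \sum_(i | P i) G i = \sum_(i | P i) F i + \sum_(i | P i) Order.max (G i - F i) 0
     - \sum_(i | P i) Order.max (F i - G i) 0.
Proof. by rewrite -sumzD -sumzB; apply: eq_bigr => i _; lia. Qed.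

Lemma balance_change f g j : balance E g j = balance E f j + loss g f j - loss f g j.
Proof.
rewrite /balance /loss (sum_gain_loss _ (f j) (g j)).
rewrite (sum_gain_loss _ (f^~ j) (g^~ j)); lia.
Qed.

(* Summing over nodes, every edge is counted once at its head, once at its tail. *)
Lemma sum_heads_tails (h : V -> V -> int) :
  \sum_j \sum_(i | E j i) h j i = \sum_j \sum_(l | E l j) h l j.
Proof.
under [RHS]eq_bigr do rewrite big_mkcond.
by rewrite [RHS]exchange_big; apply: eq_bigr => j _; rewrite big_mkcond.
Qed.

Lemma loss_conservation f g : \sum_j loss f g j = \sum_j loss g f j.
Proof.
rewrite /loss !sumzD (sum_heads_tails (fun a b => Order.max (f a b - g a b) 0)).
by rewrite (sum_heads_tails (fun a b => Order.max (g a b - f a b) 0)) addrC.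
Qed.

Lemma imbalance_ge0 f : 0 <= imbalance E f.
Proof. by apply: sumr_ge0 => j _; apply: normr_ge0. Qed.

(* If no node loses more than its (positive part of) balance, the total
   imbalance cannot grow: losses only shrink surpluses, gains are matched by
   equal losses elsewhere. *)
Lemma imbalance_nonincreasing f g :
  (forall j, loss f g j <= Order.max (balance E f j) 0) ->
  imbalance E g <= imbalance E f.
Proof.
move=> loss_le.
have step j : `|balance E g j| <= `|balance E f j| + loss g f j - loss f g j.
  have := loss_le j; have := loss_ge0 g f j; have := loss_ge0 f g j.
  rewrite (balance_change f g j); lia.
apply: (le_trans (ler_sum _ (fun j _ => step j))).
by rewrite sumzB sumzD -loss_conservation addrK.
Qed.

End Imbalance.

(* Messages sent at steps [k0] with delays [d k0]: those in transit after step
   [k] plus those delivered at step [k] are those in transit before step [k]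
   plus the message sent at step [k] (possibly delivered at once). *)
Lemma in_transit_step (g : nat -> int) (d : nat -> nat) k :
  \sum_(k0 < k.+1 | (k.+1 <= k0 + d k0)%N) g k0
    + \sum_(k0 < k.+1 | (k0 + d k0)%N == k) g k0
  = \sum_(k0 < k | (k <= k0 + d k0)%N) g k0 + g k.
Proof.
rewrite (big_mkcond (fun k0 : 'I_k.+1 => (k.+1 <= k0 + d k0)%N)).
rewrite (big_mkcond (fun k0 : 'I_k.+1 => (k0 + d k0)%N == k)).
rewrite -big_split big_ord_recr /= [in RHS]big_mkcond; congr (_ + _).
  apply: eq_bigr => k0 _ /=; have := ltn_ord k0.
  by case: ifP; case: ifP; case: ifP; rewrite ?addr0 ?add0r //; lia.
by case: (posnP (d k)) => [->|d_pos]; rewrite ?addn0 ?eqxx ?ltnn ?add0r //;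
  case: ifP; case: ifP; rewrite ?addr0 //; lia.
Qed.

Section Execution.
Variables (R : archiRealFieldType) (V : finType) (E : rel V) (lo up : V -> V -> R).
Variables (ord : V -> seq (V + V)) (dH dT : nat -> V -> V -> nat).
Variables (f fp : nat -> V -> V -> int) (ptr : nat -> V -> nat).

Hypothesis ord_incident : forall j x, (x \in ord j) = incident E j x.
Hypothesis init : forall j i, E j i ->
  f 0%N j i = lceil lo j i /\ fp 0%N j i = lceil lo j i.
Hypothesis ptr0 : forall j, (ptr 0%N j < size (ord j))%N.
Hypothesis ptr_step : forall k j,
  ptr k.+1 j = (alloc E lo up (f k) (fp k) (ord j) j (ptr k j)).2.
Hypothesis f_update : forall k l j, E l j ->
  f k.+1 l j =
    proj lo up l j
      (f k l j + (alloc E lo up (f k) (fp k) (ord j) j (ptr k j)).1.1 (inr l)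
       + \sum_(k0 < k.+1 | (k0 + dT k0 l j)%N == k)
           (alloc E lo up (f k0) (fp k0) (ord l) l (ptr k0 l)).1.1 (inl j)).
Hypothesis fp_update : forall k j i, E j i ->
  fp k.+1 j i =
    proj lo up j i
      (fp k j i + (alloc E lo up (f k) (fp k) (ord j) j (ptr k j)).1.1 (inl i)
       + \sum_(k0 < k.+1 | (k0 + dH k0 j i)%N == k)
           (alloc E lo up (f k0) (fp k0) (ord i) i (ptr k0 i)).1.1 (inr j)).

Definition c k j : V + V -> int := (alloc E lo up (f k) (fp k) (ord j) j (ptr k j)).1.1.
Definition pb k j : int := pbalance E (f k) (fp k) j.

(* Decrements of the head [l] of edge (l,j) delivered to its tail at step [k],
   and increments of the tail [i] of edge (j,i) delivered to its head. *)
Definition recv_tail k l j : int := \sum_(k0 < k.+1 | (k0 + dT k0 l j)%N == k) c k0 l (inl j).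
Definition recv_head k j i : int := \sum_(k0 < k.+1 | (k0 + dH k0 j i)%N == k) c k0 i (inr j).

Lemma ptr_valid k j : (ptr k j < size (ord j))%N.
Proof.
elim: k j => [|k IH] j; first exact: ptr0.
by rewrite ptr_step; case: (alloc_spec lo up (f k) (fp k) (ord_incident j) (IH j)).
Qed.

Lemma c_spec k j :
  [/\ feasible_alloc lo up (f k) (fp k) j (c k j),
      0 < pb k j -> net_alloc E j (c k j) <= pb k j
    & ~~ (0 < pb k j) -> forall x, c k j x = 0].
Proof. by case: (alloc_spec lo up (f k) (fp k) (ord_incident j) (ptr_valid k j)). Qed.

Lemma c_out_ge0 k j l : 0 <= c k j (inr l).
Proof. by case: (c_spec k j) => -[]. Qed.

Lemma c_in_le0 k j i : c k j (inl i) <= 0.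
Proof. by case: (c_spec k j) => -[]. Qed.

Lemma recv_tail_le0 k l j : recv_tail k l j <= 0.
Proof. by apply: sumr_le0 => k0 _; apply: c_in_le0. Qed.

Lemma recv_head_ge0 k j i : 0 <= recv_head k j i.
Proof. by apply: sumr_ge0 => k0 _; apply: c_out_ge0. Qed.

Lemma flows_in_range k a b : E a b ->
  (lceil lo a b <= f k a b <= cap lo up a b) && (lceil lo a b <= fp k a b <= cap lo up a b).
Proof.
case: k => [|k] Eab.
  by have [-> ->] := init Eab; rewrite /cap; apply/andP; split; lia.
by rewrite f_update // fp_update // !proj_ge_lceil !proj_le_cap.
Qed.

(* The four one-step comparisons: an own feasible change is never cut off by
   the projection, and received changes can only be cut off towards the bounds. *)
Lemma f_step_lower k j i : E j i ->
  f k j i + c k i (inr j) + recv_tail k j i <= f k.+1 j i.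
Proof.
move=> Eji; rewrite f_update //; apply: proj_ge => //.
have [[_ _ out_ok _] _ _] := c_spec k i.
have := flows_in_range k Eji; have := recv_tail_le0 k j i; have := out_ok j.
rewrite /cap /recv_tail /c; lia.
Qed.

Lemma f_step_upper k l j : E l j -> f k.+1 l j <= f k l j + c k j (inr l).
Proof.
move=> Elj; rewrite f_update //; apply: proj_le.
  by have := recv_tail_le0 k l j; rewrite /recv_tail /c; lia.
by have := flows_in_range k Elj; have := c_out_ge0 k j l; rewrite /c; lia.
Qed.

Lemma fp_step_lower k j i : E j i -> fp k j i + c k j (inl i) <= fp k.+1 j i.
Proof.
move=> Eji; rewrite fp_update //; apply: proj_ge.
  by have := recv_head_ge0 k j i; rewrite /recv_head /c; lia.
by have := flows_in_range k Eji; have := c_in_le0 k j i; rewrite /cap /c; lia.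
Qed.

Lemma fp_step_upper k j i : E j i ->
  fp k.+1 j i <= fp k j i + c k j (inl i) + recv_head k j i.
Proof.
move=> Eji; rewrite fp_update //; apply: proj_le => //.
have [[_ _ _ in_ok] _ _] := c_spec k j.
have := flows_in_range k Eji; have := recv_head_ge0 k j i; have := in_ok i.
rewrite /recv_head /c; lia.
Qed.

Lemma pbalance_step k j : pb k j - net_alloc E j (c k j) <= pb k.+1 j.
Proof.
have heads : \sum_(i | E j i) (fp k j i + c k j (inl i)) <= \sum_(i | E j i) fp k.+1 j i.
  by apply: ler_sum => i; apply: fp_step_lower.
have tails : \sum_(l | E l j) f k.+1 l j <= \sum_(l | E l j) (f k l j + c k j (inr l)).
  by apply: ler_sum => l; apply: f_step_upper.
move: heads tails; rewrite /pb /pbalance /net_alloc !sumzD; lia.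
Qed.

Lemma net_alloc_le_pbalance k j : 0 <= pb k j -> net_alloc E j (c k j) <= pb k j.
Proof.
have [_ le_pos zero] := c_spec k j.
case: (ltrP 0 (pb k j)) => [/le_pos //|pb_le0 pb_ge0].
by rewrite net_alloc0 // => x; apply: zero; rewrite -leNgt.
Qed.

Lemma pbalance_nonneg_persist k m j : 0 <= pb k j -> 0 <= pb (k + m)%N j.
Proof.
elim: m => [|m IH] pb_ge0; first by rewrite addn0.
rewrite addnS; have := pbalance_step (k + m) j.
have := net_alloc_le_pbalance (IH pb_ge0); lia.
Qed.

Lemma c_zero_before_negative k j : pb k j < 0 ->
  forall k0, (k0 <= k)%N -> forall x, c k0 j x = 0.
Proof.
move=> pb_lt0 k0 le_k0k x; have [_ _ ->] // := c_spec k0 j.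
apply/negP => pb_pos; have := pbalance_nonneg_persist (k - k0) (ltW pb_pos).
by rewrite subnKC //; lia.
Qed.

(* Changes in transit on edge (j,i) at step k: decrements sent by the head j
   not yet delivered to the tail, and increments sent by the tail i not yet
   delivered to the head. *)
Definition pend_dec k j i : int := \sum_(k0 < k | (k <= k0 + dT k0 j i)%N) - c k0 j (inl i).
Definition pend_inc k j i : int := \sum_(k0 < k | (k <= k0 + dH k0 j i)%N) c k0 i (inr j).

Lemma pend_dec_ge0 k j i : 0 <= pend_dec k j i.
Proof. by apply: sumr_ge0 => k0 _; rewrite oppr_ge0 c_in_le0. Qed.

Lemma pend_inc_ge0 k j i : 0 <= pend_inc k j i.
Proof. by apply: sumr_ge0 => k0 _; apply: c_out_ge0. Qed.

Lemma pend_dec_step k j i :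
  pend_dec k.+1 j i - recv_tail k j i = pend_dec k j i - c k j (inl i).
Proof.
have := in_transit_step (fun k0 => - c k0 j (inl i)) (fun k0 => dT k0 j i) k.
by rewrite /pend_dec /recv_tail /= !sumrN; apply.
Qed.

Lemma pend_inc_step k j i :
  pend_inc k.+1 j i + recv_head k j i = pend_inc k j i + c k i (inr j).
Proof. exact: (in_transit_step (fun k0 => c k0 i (inr j)) (fun k0 => dH k0 j i) k). Qed.

(* The tail applies its increments and the head its decrements at once, each
   learning the other's only later: the gap between actual and perceived flow
   covers everything still in transit. *)
Lemma in_transit_le_gap k j i : E j i ->
  pend_dec k j i + pend_inc k j i <= f k j i - fp k j i.
Proof.
elim: k => [|k IH] Eji.
  by rewrite /pend_dec /pend_inc !big_ord0; have [-> ->] := init Eji; lia.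
have := f_step_lower k Eji; have := fp_step_upper k Eji.
have := pend_dec_step k j i; have := pend_inc_step k j i; have := IH Eji; lia.
Qed.

Lemma loss_le_alloc k j :
  loss E (f k) (f k.+1) j <= \sum_(i | E j i) pend_dec k j i + net_alloc E j (c k j).
Proof.
have heads : \sum_(i | E j i) Order.max (f k j i - f k.+1 j i) 0
              <= \sum_(i | E j i) (pend_dec k j i - c k j (inl i)).
  apply: ler_sum => i Eji; have := f_step_lower k Eji; have := pend_dec_step k j i.
  have := pend_dec_ge0 k.+1 j i; have := recv_tail_le0 k j i.
  by have := c_out_ge0 k i j; lia.
have tails : \sum_(l | E l j) Order.max (f k.+1 l j - f k l j) 0
              <= \sum_(l | E l j) c k j (inr l).
  by apply: ler_sum => l Elj; have := f_step_upper k Elj; have := c_out_ge0 k j l; lia.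
by move: heads tails; rewrite /loss /net_alloc sumzB; lia.
Qed.

Lemma loss_le_balance k j : loss E (f k) (f k.+1) j <= Order.max (balance E (f k) j) 0.
Proof.
apply: le_trans (loss_le_alloc k j) _.
case: (ltrP (pb k j) 0) => [pb_lt0|pb_ge0].
  have zero := c_zero_before_negative pb_lt0.
  have no_pending : \sum_(i | E j i) pend_dec k j i = 0.
    by apply: big1 => i _; apply: big1 => k0 _; rewrite zero ?oppr0 // ltnW.
  by rewrite no_pending net_alloc0 => [|x]; rewrite ?add0r ?le_max ?lexx ?orbT ?zero.
have gap : \sum_(i | E j i) pend_dec k j i <= \sum_(i | E j i) (f k j i - fp k j i).
  apply: ler_sum => i Eji; have := in_transit_le_gap k Eji.
  by have := pend_inc_ge0 k j i; lia.
move: gap (net_alloc_le_pbalance pb_ge0).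
rewrite /pb /pbalance /balance sumzB; lia.
Qed.

End Execution.

Theorem proposition3
  (R : archiRealFieldType) (V : finType) (E : rel V) (lo up : V -> V -> R)
  (* n >= 2, strongly connected digraph *)
  (Hn : (1 < #|V|)%N)
  (Hsc : forall x y : V, connect E x y) (Hirr : irreflexive E)
  (* edge bounds 1 <= l_ji <= u_ji *)
  (Hbnd : forall j i : V, E j i -> 1 <= lo j i /\ lo j i <= up j i)
  (* cyclic orders of incident edges and initial pointers *)
  (ord : V -> seq (V + V)) (Hord_uniq : forall j, uniq (ord j))
  (Hord_mem : forall j x, (x \in ord j) = incident E j x)
  (* delays: dH k j i = delay of the message sent at step k by the tail v_i to
     the head v_j about edge (v_j,v_i); dT k j i = delay of the message sent at
     step k by the head v_j to the tail v_i about edge (v_j,v_i) *)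
  (taubar : nat) (dH dT : nat -> V -> V -> nat)
  (HdH : forall k j i, (dH k j i <= taubar)%N)
  (HdT : forall k j i, (dT k j i <= taubar)%N)
  (* the execution: actual flows, perceived flows, pointers *)
  (f fp : nat -> V -> V -> int) (ptr : nat -> V -> nat)
  (Hinit : forall j i, E j i -> f 0%N j i = lceil lo j i /\ fp 0%N j i = lceil lo j i)
  (Hptr0 : forall j, (ptr 0%N j < size (ord j))%N)
  (Hptr : forall k j,
     ptr k.+1 j = (alloc E lo up (f k) (fp k) (ord j) j (ptr k j)).2)
  (Hf : forall k l j, E l j ->
     f k.+1 l j =
       proj lo up l j
         (f k l j + (alloc E lo up (f k) (fp k) (ord j) j (ptr k j)).1.1 (inr l)
          + \sum_(k0 < k.+1 | (k0 + dT k0 l j)%N == k)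
              (alloc E lo up (f k0) (fp k0) (ord l) l (ptr k0 l)).1.1 (inl j)))
  (Hfp : forall k j i, E j i ->
     fp k.+1 j i =
       proj lo up j i
         (fp k j i + (alloc E lo up (f k) (fp k) (ord j) j (ptr k j)).1.1 (inl i)
          + \sum_(k0 < k.+1 | (k0 + dH k0 j i)%N == k)
              (alloc E lo up (f k0) (fp k0) (ord i) i (ptr k0 i)).1.1 (inr j))) :
  forall k : nat, 0 <= imbalance E (f k.+1) <= imbalance E (f k).
Proof.
move=> k; rewrite imbalance_ge0; apply: imbalance_nonincreasing => j.
exact: (loss_le_balance Hord_mem Hinit Hptr0 Hptr Hf Hfp).
Qed.
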